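(* Let $X$ be a separable real Banach space with property (au$^*$). Then $X^*$ has no proper closed norming subspace; i.e. if $M\subseteq X^*$ is a norm-closed linear subspace such that $\|x\|=\sup\{|m(x)|: m\in M,\ \|m\|\le 1\}$ for every $x\in X$, then $M=X^*$. Consequently $X^*$ is separable.
   Context: All Banach spaces are real. A separable Banach space $X$ has property (au$^*$) if $\lim_{n\to\infty}(\|x^*+x_n^*\|-\|x^*-x_n^*\|)=0$ whenever $x^*\in X^*$ and $(x_n^* )_{n\ge1}$ is a weak$^*$-null sequence in $X^*$. *)

From Stdlib Require Import Reals ClassicalEpsilon.
Open Scope R_scope.

Record NormedSpace := {
  ns_car :> Type;
  ns_zero : ns_car;
  ns_add : ns_car -> ns_car -> ns_car;
  ns_opp : ns_car -> ns_car;
  ns_scal : R -> ns_car -> ns_car;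
  ns_norm : ns_car -> R;
  ns_add_assoc : forall x y z, ns_add x (ns_add y z) = ns_add (ns_add x y) z;
  ns_add_comm : forall x y, ns_add x y = ns_add y x;
  ns_add_zero : forall x, ns_add x ns_zero = x;
  ns_add_opp : forall x, ns_add x (ns_opp x) = ns_zero;
  ns_scal_assoc : forall a b x, ns_scal a (ns_scal b x) = ns_scal (a * b) x;
  ns_scal_one : forall x, ns_scal 1 x = x;
  ns_scal_distr_l : forall a x y, ns_scal a (ns_add x y) = ns_add (ns_scal a x) (ns_scal a y);
  ns_scal_distr_r : forall a b x, ns_scal (a + b) x = ns_add (ns_scal a x) (ns_scal b x);
  ns_norm_eq0 : forall x, ns_norm x = 0 -> x = ns_zero;
  ns_norm_scal : forall a x, ns_norm (ns_scal a x) = Rabs a * ns_norm x;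
  ns_norm_triangle : forall x y, ns_norm (ns_add x y) <= ns_norm x + ns_norm y
}.

Arguments ns_zero {_}. Arguments ns_add {_} _ _. Arguments ns_opp {_} _.
Arguments ns_scal {_} _ _. Arguments ns_norm {_} _.

Definition ns_sub {X : NormedSpace} (x y : X) : X := ns_add x (ns_opp y).

Definition complete (X : NormedSpace) : Prop :=
  forall u : nat -> X,
    (forall eps, eps > 0 -> exists N, forall m n, (m >= N)%nat -> (n >= N)%nat ->
        ns_norm (ns_sub (u m) (u n)) < eps) ->
    exists l : X, forall eps, eps > 0 -> exists N, forall n, (n >= N)%nat ->
        ns_norm (ns_sub (u n) l) < eps.

Definition separable (X : NormedSpace) : Prop :=
  exists d : nat -> X, forall x : X, forall eps, eps > 0 ->
    exists n, ns_norm (ns_sub x (d n)) < eps.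

Definition in_dual (X : NormedSpace) (f : X -> R) : Prop :=
  (forall x y, f (ns_add x y) = f x + f y) /\
  (forall a x, f (ns_scal a x) = a * f x) /\
  (exists C, forall x, Rabs (f x) <= C * ns_norm x).

Definition dnorm (X : NormedSpace) (f : X -> R) : R :=
  epsilon (inhabits 0)
    (is_lub (fun r => exists x : X, ns_norm x <= 1 /\ r = Rabs (f x))).

Definition weak_star_null (X : NormedSpace) (fs : nat -> X -> R) : Prop :=
  (forall n, in_dual X (fs n)) /\ (forall x : X, Un_cv (fun n => fs n x) 0).

Definition property_au_star (X : NormedSpace) : Prop :=
  forall (g : X -> R) (fs : nat -> X -> R),
    in_dual X g -> weak_star_null X fs ->
    Un_cv (fun n => dnorm X (fun x => g x + fs n x) - dnorm X (fun x => g x - fs n x)) 0.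

Definition dual_subspace (X : NormedSpace) (M : (X -> R) -> Prop) : Prop :=
  (forall f, M f -> in_dual X f) /\
  M (fun _ => 0) /\
  (forall f g, M f -> M g -> M (fun x => f x + g x)) /\
  (forall a f, M f -> M (fun x => a * f x)).

Definition dual_norm_closed (X : NormedSpace) (M : (X -> R) -> Prop) : Prop :=
  forall (u : nat -> X -> R) (f : X -> R),
    (forall n, M (u n)) -> in_dual X f ->
    Un_cv (fun n => dnorm X (fun x => u n x - f x)) 0 -> M f.

Definition norming (X : NormedSpace) (M : (X -> R) -> Prop) : Prop :=
  forall x : X,
    is_lub (fun r => exists m, M m /\ dnorm X m <= 1 /\ r = Rabs (m x)) (ns_norm x).

Definition dual_separable (X : NormedSpace) : Prop :=
  exists d : nat -> X -> R, (forall n, in_dual X (d n)) /\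
    forall f, in_dual X f -> forall eps, eps > 0 ->
      exists n, dnorm X (fun x => f x - d n x) < eps.

From Stdlib Require Import Reals Lra Lia Psatz ClassicalEpsilon Classical
  FunctionalExtensionality ZArith Cantor.
Open Scope R_scope.

(* Suppose [f] is at distance [r > 0] from a closed norming
   subspace [M], and [m0] in [M] almost realises this distance; put
   [g = f - m0].  Because [M] is norming, its ball of radius [||g||] is
   weak-star dense in the corresponding ball of X^* ([ball_weak_star_dense],
   a convexity argument tested on finitely many points of a dense sequence).
   This yields [m_n] in that ball with [h_n = m_n - g] weak-star null.  Then
   [||g + h_n|| <= ||g||], while [||g - h_n|| = 2 ||f - (m0 + m_n / 2)||] is at
   least [2 r] and at least [2 ||g|| - r]; this contradicts (au-star).

   A Hahn-Banach theorem for separable spaces (extend one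
   dimension at a time along a dense sequence, then by uniform continuity)
   gives functionals [g_j] of norm at most one norming the points [d_j] of a
   dense sequence.  The closed span of the [g_j] is a closed norming subspace,
   hence all of X^*, and the rational combinations of the [g_j] are dense. *)

Lemma near_infimum {A : Type} (P : A -> Prop) (F : A -> R) (th : R) :
  (exists a, P a) -> (forall a, P a -> 0 <= F a) -> th > 0 ->
  exists a0, P a0 /\ forall a, P a -> F a0 <= F a + th.
Proof.
  intros [a1 Ha1] Hpos Hth.
  destruct (completeness (fun r => exists a, P a /\ r = - F a)) as [L [HL1 HL2]].
  - exists 0. intros r [a [Pa ->]]. specialize (Hpos a Pa). lra.
  - exists (- F a1). eauto.
  - apply NNPP. intro Hn.
    enough (L <= L - th) by lra.
    apply HL2. intros r [a [Pa ->]].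
    apply Rnot_lt_le. intro Hlt. apply Hn. exists a. split; auto.
    intros b Pb. assert (- F b <= L) by (apply HL1; eauto). lra.
Qed.

Lemma inv_succ_pos n : 0 < / (INR n + 1).
Proof. apply Rinv_0_lt_compat. pose proof (pos_INR n). lra. Qed.

Lemma inv_succ_small eps : eps > 0 ->
  exists N : nat, forall n, (n >= N)%nat -> / (INR n + 1) < eps.
Proof.
  intros He. destruct (archimed_cor1 eps He) as [N [HN HN0]]. exists N. intros n Hn.
  apply le_INR in Hn. apply lt_INR in HN0. simpl in HN0.
  eapply Rle_lt_trans; [|exact HN]. apply Rinv_le_contravar; lra.
Qed.

Lemma Rabs_le_between a b : Rabs a <= b -> - b <= a <= b.
Proof.
  intros H. pose proof (Rle_abs a). pose proof (Rle_abs (- a)). rewrite Rabs_Ropp in *. lra.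
Qed.

Lemma le_epsilon_le a b : (forall eps, eps > 0 -> a <= b + eps) -> a <= b.
Proof.
  intros H. apply Rnot_lt_le. intro Hl. specialize (H ((a - b) / 2) ltac:(lra)). lra.
Qed.

Lemma eq_epsilon_eq a b : (forall eps, eps > 0 -> Rabs (a - b) <= eps) -> a = b.
Proof.
  intros H. destruct (Req_dec a b) as [|Hne]; auto.
  assert (Rabs (a - b) > 0) by (apply Rabs_pos_lt; lra).
  specialize (H (Rabs (a - b) / 2) ltac:(lra)). lra.
Qed.

Section NormedSpaceFacts.
Variable X : NormedSpace.
Implicit Types x y z w : X.

Lemma add_cancel_l x y z : ns_add x y = ns_add x z -> y = z.
Proof.
  intro H.
  assert (E : forall u : X, ns_add (ns_opp x) (ns_add x u) = u).
  { intro u. rewrite ns_add_assoc, (ns_add_comm _ (ns_opp x)), ns_add_opp.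
    rewrite ns_add_comm. apply ns_add_zero. }
  rewrite <- (E y), <- (E z), H. reflexivity.
Qed.

Lemma add_zero_l x : ns_add ns_zero x = x.
Proof. rewrite ns_add_comm. apply ns_add_zero. Qed.

Lemma scal_zero_l x : ns_scal 0 x = ns_zero.
Proof.
  apply (add_cancel_l (ns_scal 0 x)). rewrite ns_add_zero, <- ns_scal_distr_r.
  f_equal. ring.
Qed.

Lemma scal_zero_r a : ns_scal a (@ns_zero X) = ns_zero.
Proof.
  rewrite <- (scal_zero_l ns_zero), ns_scal_assoc, Rmult_0_r. reflexivity.
Qed.

Lemma opp_scal x : ns_opp x = ns_scal (-1) x.
Proof.
  apply (add_cancel_l x). rewrite ns_add_opp.
  rewrite <- (ns_scal_one X x) at 1. rewrite <- ns_scal_distr_r.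
  replace (1 + -1) with 0 by ring. rewrite scal_zero_l. reflexivity.
Qed.

Lemma add_neg_scal x : ns_add x (ns_scal (-1) x) = ns_zero.
Proof. rewrite <- opp_scal. apply ns_add_opp. Qed.

Lemma add_sub x y : ns_add y (ns_sub x y) = x.
Proof.
  unfold ns_sub. rewrite ns_add_assoc, (ns_add_comm _ y x), <- ns_add_assoc, ns_add_opp.
  apply ns_add_zero.
Qed.

Lemma add_add_swap x y z w :
  ns_add (ns_add x y) (ns_add z w) = ns_add (ns_add x z) (ns_add y w).
Proof.
  rewrite <- !ns_add_assoc. f_equal. rewrite !ns_add_assoc. f_equal. apply ns_add_comm.
Qed.

Lemma sub_add_distr x y z w :
  ns_sub (ns_add x y) (ns_add z w) = ns_add (ns_sub x z) (ns_sub y w).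
Proof. unfold ns_sub. rewrite !opp_scal, ns_scal_distr_l. apply add_add_swap. Qed.

Lemma sub_scal a x y : ns_sub (ns_scal a x) (ns_scal a y) = ns_scal a (ns_sub x y).
Proof.
  unfold ns_sub. rewrite !opp_scal, ns_scal_distr_l, !ns_scal_assoc.
  do 2 f_equal. ring.
Qed.

Lemma sub_add_scal_eq v v' t t' y :
  ns_add v (ns_scal t y) = ns_add v' (ns_scal t' y) -> ns_sub v v' = ns_scal (t' - t) y.
Proof.
  intros E. apply (add_cancel_l (ns_add v' (ns_scal t y))).
  transitivity (ns_add v (ns_scal t y)).
  - rewrite (ns_add_comm _ v'), <- ns_add_assoc, add_sub. apply ns_add_comm.
  - rewrite E, <- ns_add_assoc, <- ns_scal_distr_r. do 2 f_equal. ring.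
Qed.

Lemma add_sub_cancel_r x y : ns_sub (ns_add x y) y = x.
Proof. unfold ns_sub. rewrite <- ns_add_assoc, ns_add_opp. apply ns_add_zero. Qed.

Lemma norm_zero : ns_norm (@ns_zero X) = 0.
Proof. rewrite <- (scal_zero_l ns_zero), ns_norm_scal, Rabs_R0. ring. Qed.

Lemma norm_opp x : ns_norm (ns_opp x) = ns_norm x.
Proof. rewrite opp_scal, ns_norm_scal, Rabs_left by lra. ring. Qed.

Lemma norm_nonneg x : 0 <= ns_norm x.
Proof.
  pose proof (ns_norm_triangle X x (ns_opp x)) as H.
  rewrite ns_add_opp, norm_zero, norm_opp in H. lra.
Qed.

Lemma norm_sub_sym x y : ns_norm (ns_sub x y) = ns_norm (ns_sub y x).
Proof.
  unfold ns_sub. rewrite <- norm_opp. f_equal.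
  apply (add_cancel_l (ns_add x (ns_opp y))). rewrite ns_add_opp, ns_add_assoc.
  rewrite <- (ns_add_assoc _ x (ns_opp y) y), (ns_add_comm _ (ns_opp y) y).
  rewrite ns_add_opp, ns_add_zero, ns_add_opp. reflexivity.
Qed.

Lemma norm_sub_triangle x y z :
  ns_norm (ns_sub x z) <= ns_norm (ns_sub x y) + ns_norm (ns_sub y z).
Proof.
  replace (ns_sub x z) with (ns_add (ns_sub x y) (ns_sub y z)).
  - apply ns_norm_triangle.
  - apply (add_cancel_l z). rewrite add_sub.
    rewrite (ns_add_comm _ (ns_sub x y)), ns_add_assoc, !add_sub. reflexivity.
Qed.

Lemma norm_reverse_triangle x y : ns_norm x - ns_norm (ns_sub x y) <= ns_norm y.
Proof.
  pose proof (ns_norm_triangle X y (ns_sub x y)) as Ht. rewrite add_sub in Ht. lra.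
Qed.

Lemma dual_zero f : in_dual X f -> f ns_zero = 0.
Proof. intros [_ [Hs _]]. rewrite <- (scal_zero_l ns_zero), Hs. ring. Qed.

Lemma in_dual_ext f g : (forall x, f x = g x) -> in_dual X f -> in_dual X g.
Proof. intros E. replace g with f; auto. apply functional_extensionality; auto. Qed.

Lemma in_dual_comb f g a b : in_dual X f -> in_dual X g ->
  in_dual X (fun x => a * f x + b * g x).
Proof.
  intros [Fa [Fs [C HC]]] [Ga [Gs [D HD]]]. split; [|split].
  - intros x y. rewrite Fa, Ga. ring.
  - intros c x. rewrite Fs, Gs. ring.
  - exists (Rabs a * Rmax C 0 + Rabs b * Rmax D 0). intro x.
    specialize (HC x). specialize (HD x). pose proof (norm_nonneg x).
    pose proof (Rmax_l C 0). pose proof (Rmax_r C 0).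
    pose proof (Rmax_l D 0). pose proof (Rmax_r D 0).
    eapply Rle_trans. apply Rabs_triang. rewrite !Rabs_mult.
    pose proof (Rabs_pos a). pose proof (Rabs_pos b).
    assert (Rabs (f x) <= Rmax C 0 * ns_norm x) by nra.
    assert (Rabs (g x) <= Rmax D 0 * ns_norm x) by nra. nra.
Qed.

Lemma in_dual_add f g : in_dual X f -> in_dual X g -> in_dual X (fun x => f x + g x).
Proof.
  intros. eapply in_dual_ext; [|apply (in_dual_comb f g 1 1); auto]. intro; simpl; ring.
Qed.

Lemma in_dual_sub f g : in_dual X f -> in_dual X g -> in_dual X (fun x => f x - g x).
Proof.
  intros. eapply in_dual_ext; [|apply (in_dual_comb f g 1 (-1)); auto]. intro; simpl; ring.
Qed.

Lemma in_dual_scal f a : in_dual X f -> in_dual X (fun x => a * f x).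
Proof.
  intros. eapply in_dual_ext; [|apply (in_dual_comb f f a 0); auto]. intro; simpl; ring.
Qed.

Lemma in_dual_zero : in_dual X (fun _ => 0).
Proof.
  split; [|split]; intros; try ring. exists 0. intro x. rewrite Rabs_R0.
  pose proof (norm_nonneg x). nra.
Qed.

Lemma dnorm_spec f : in_dual X f ->
  is_lub (fun r => exists x : X, ns_norm x <= 1 /\ r = Rabs (f x)) (dnorm X f).
Proof.
  intros Hf. unfold dnorm. apply epsilon_spec.
  destruct Hf as [_ [_ [C HC]]].
  destruct (completeness (fun r => exists x : X, ns_norm x <= 1 /\ r = Rabs (f x)))
    as [l Hl].
  - exists (Rmax C 0). intros r [x [Hx ->]]. specialize (HC x).
    pose proof (norm_nonneg x). pose proof (Rmax_l C 0). pose proof (Rmax_r C 0). nra.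
  - exists (Rabs (f ns_zero)), ns_zero. rewrite norm_zero. split; auto; lra.
  - exists l. exact Hl.
Qed.

Lemma dnorm_nonneg f : in_dual X f -> 0 <= dnorm X f.
Proof.
  intros Hf. destruct (dnorm_spec f Hf) as [Hub _].
  apply Rle_trans with (Rabs (f ns_zero)); [apply Rabs_pos|].
  apply Hub. exists ns_zero. rewrite norm_zero. split; auto; lra.
Qed.

Lemma dnorm_bound f x : in_dual X f -> Rabs (f x) <= dnorm X f * ns_norm x.
Proof.
  intros Hf. pose proof (dnorm_nonneg f Hf). destruct (dnorm_spec f Hf) as [Hub _].
  destruct (Req_dec (ns_norm x) 0) as [E|E].
  { apply ns_norm_eq0 in E. subst x. rewrite dual_zero, norm_zero, Rabs_R0 by auto. lra. }
  pose proof (norm_nonneg x).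
  assert (Hx : 0 < ns_norm x) by lra.
  assert (Hinv : 0 < / ns_norm x) by (apply Rinv_0_lt_compat; auto).
  assert (Hunit : Rabs (f (ns_scal (/ ns_norm x) x)) <= dnorm X f).
  { apply Hub. exists (ns_scal (/ ns_norm x) x). split; auto.
    rewrite ns_norm_scal, Rabs_right by lra. field_simplify; lra. }
  destruct Hf as [_ [Hs _]]. rewrite Hs, Rabs_mult, Rabs_right in Hunit by lra.
  apply (Rmult_le_compat_l (ns_norm x)) in Hunit; [|lra].
  rewrite <- Rmult_assoc, Rinv_r in Hunit by lra. lra.
Qed.

Lemma dnorm_le f c : in_dual X f -> 0 <= c ->
  (forall x, Rabs (f x) <= c * ns_norm x) -> dnorm X f <= c.
Proof.
  intros Hf Hc H. destruct (dnorm_spec f Hf) as [_ Hl]. apply Hl.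
  intros r [x [Hx ->]]. specialize (H x). nra.
Qed.

Lemma dnorm_le_1 f : in_dual X f -> dnorm X f <= 1 -> forall x, Rabs (f x) <= ns_norm x.
Proof.
  intros Hf H x. pose proof (dnorm_bound f x Hf). pose proof (norm_nonneg x). nra.
Qed.

Lemma dnorm_ext f g : (forall x, f x = g x) -> dnorm X f = dnorm X g.
Proof. intros E. replace g with f; auto. apply functional_extensionality; auto. Qed.

Lemma dnorm_sub_sym f g : in_dual X f -> in_dual X g ->
  dnorm X (fun x => f x - g x) = dnorm X (fun x => g x - f x).
Proof.
  intros Hf Hg. pose proof (in_dual_sub f g Hf Hg). pose proof (in_dual_sub g f Hg Hf).
  apply Rle_antisym; apply dnorm_le; auto using dnorm_nonneg; intro x;
    rewrite Rabs_minus_sym; apply (dnorm_bound (fun x => _ x - _ x)); auto.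
Qed.

Lemma dnorm_scal_ge f a : in_dual X f -> 0 < a -> a * dnorm X f <= dnorm X (fun x => a * f x).
Proof.
  intros Hf Ha. pose proof (in_dual_scal f a Hf) as Haf.
  pose proof (dnorm_nonneg _ Haf).
  enough (dnorm X f <= dnorm X (fun x => a * f x) / a) as Hle.
  { apply (Rmult_le_compat_l a) in Hle; [|lra].
    replace (a * (dnorm X (fun x => a * f x) / a)) with (dnorm X (fun x => a * f x)) in Hle
      by (field; lra). exact Hle. }
  apply dnorm_le; auto.
  { apply Rmult_le_pos; [lra | left; apply Rinv_0_lt_compat; lra]. }
  intro x. pose proof (dnorm_bound _ x Haf) as B. cbv beta in B.
  rewrite Rabs_mult, (Rabs_right a) in B by lra.
  apply (Rmult_le_reg_l a); auto.
  replace (a * (dnorm X (fun x => a * f x) / a * ns_norm x))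
    with (dnorm X (fun x => a * f x) * ns_norm x) by (field; lra). exact B.
Qed.

Lemma dnorm_sub_triangle f g h : in_dual X f -> in_dual X g -> in_dual X h ->
  dnorm X (fun x => f x - h x) <= dnorm X (fun x => f x - g x) + dnorm X (fun x => g x - h x).
Proof.
  intros Hf Hg Hh.
  pose proof (in_dual_sub f g Hf Hg) as Hfg. pose proof (in_dual_sub g h Hg Hh) as Hgh.
  pose proof (dnorm_nonneg _ Hfg). pose proof (dnorm_nonneg _ Hgh).
  apply dnorm_le; [apply in_dual_sub; auto | lra |]. intro x.
  replace (f x - h x) with ((f x - g x) + (g x - h x)) by ring.
  eapply Rle_trans. apply Rabs_triang.
  pose proof (dnorm_bound _ x Hfg). pose proof (dnorm_bound _ x Hgh). cbv beta in *. lra.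
Qed.

End NormedSpaceFacts.

Section NormingSubspaces.
Variable X : NormedSpace.
Variable M : (X -> R) -> Prop.
Hypothesis HM : dual_subspace X M.

Lemma subspace_comb f g a b : M f -> M g -> M (fun x => a * f x + b * g x).
Proof.
  destruct HM as [_ [_ [Hadd Hscal]]]. intros Hf Hg.
  apply (Hadd (fun x => a * f x) (fun x => b * g x)); apply Hscal; auto.
Qed.

Definition in_ball (c : R) (m : X -> R) : Prop :=
  M m /\ forall x, Rabs (m x) <= c * ns_norm x.

(* The balls of [M] are convex; this drives the minimisation argument below. *)
Lemma ball_convex c m0 m t : 0 <= t <= 1 -> in_ball c m0 -> in_ball c m ->
  in_ball c (fun x => (1 - t) * m0 x + t * m x).
Proof.
  intros Ht [Hm0 Hb0] [Hm Hb]. split; [apply subspace_comb; auto|].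
  intro y. eapply Rle_trans. apply Rabs_triang. rewrite !Rabs_mult.
  rewrite (Rabs_right t), (Rabs_right (1 - t)) by lra.
  specialize (Hb0 y). specialize (Hb y). nra.
Qed.

Lemma norming_witness c x delta : norming X M -> 0 <= c -> delta > 0 ->
  exists m, in_ball c m /\ c * ns_norm x - delta < m x.
Proof.
  intros Hn Hc Hd. destruct (Hn x) as [_ Hlub].
  set (e := delta / (c + 1)).
  assert (He : 0 < e) by (apply Rdiv_lt_0_compat; lra).
  assert (Hce : c * e < delta).
  { unfold e. apply (Rmult_lt_reg_r (c + 1)); [lra|].
    replace (c * (delta / (c + 1)) * (c + 1)) with (c * delta) by (field; lra). nra. }
  assert (Hex : exists m1, M m1 /\ dnorm X m1 <= 1 /\ ns_norm x - e < Rabs (m1 x)).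
  { apply NNPP; intro Hne.
    enough (ns_norm x <= ns_norm x - e) by lra.
    apply Hlub. intros r [m1 [Hm1 [Hd1 ->]]].
    apply Rnot_lt_le. intro Hl. apply Hne. eauto. }
  destruct Hex as [m1 [Hm1 [Hd1 Hx1]]].
  pose proof (dnorm_le_1 X m1 (proj1 HM m1 Hm1) Hd1) as Hb1.
  destruct HM as [_ [_ [_ Hscal]]].
  destruct (Rcase_abs (m1 x)) as [Hneg | Hpos].
  - exists (fun y => (- c) * m1 y). split; [split; auto|].
    + intro y. rewrite Rabs_mult, Rabs_Ropp, (Rabs_right c) by lra.
      specialize (Hb1 y). nra.
    + rewrite Rabs_left in Hx1 by lra. nra.
  - exists (fun y => c * m1 y). split; [split; auto|].
    + intro y. rewrite Rabs_mult, (Rabs_right c) by lra. specialize (Hb1 y). nra.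
    + rewrite Rabs_right in Hx1 by lra. nra.
Qed.

End NormingSubspaces.

(** Weak-star convergence is tested on the first [k] points of a dense
    sequence [d] through the quadratic form
      [dpair d k u v = sum_(j < k) u (d j) * v (d j)],
    which is represented by the vector [dvec d k a = sum_(j < k) a (d j) d j]:
    [m (dvec d k a) = dpair d k a m] for every linear [m]. *)

Section FinitePairing.
Variable X : NormedSpace.
Variable d : nat -> X.

Fixpoint dpair (k : nat) (u v : X -> R) : R :=
  match k with O => 0 | S k => dpair k u v + u (d k) * v (d k) end.

Fixpoint dvec (k : nat) (a : X -> R) : X :=
  match k with O => ns_zero | S k => ns_add (dvec k a) (ns_scal (a (d k)) (d k)) end.

Lemma dvec_eval k a m : in_dual X m -> m (dvec k a) = dpair k a m.
Proof.
  intros Hm. induction k as [|k IH]; simpl; [apply dual_zero; auto|].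
  destruct Hm as [Ha [Hs _]]. rewrite Ha, Hs, IH. ring.
Qed.

Lemma dpair_nonneg k u : 0 <= dpair k u u.
Proof. induction k; simpl; nra. Qed.

Lemma dpair_sub_r k a u v : dpair k a (fun y => u y - v y) = dpair k a u - dpair k a v.
Proof. induction k as [|k IH]; simpl; [|rewrite IH]; ring. Qed.

Lemma dpair_expand k u v t :
  dpair k (fun y => u y - t * v y) (fun y => u y - t * v y) =
  dpair k u u - 2 * t * dpair k u v + t * t * dpair k v v.
Proof. induction k as [|k IH]; simpl; [|rewrite IH]; ring. Qed.

Lemma dpair_first_order k u v t e : 0 < t ->
  dpair k u u <= dpair k (fun y => u y - t * v y) (fun y => u y - t * v y) + t * e ->
  2 * dpair k u v <= t * dpair k v v + e.
Proof.
  intros Ht H. rewrite dpair_expand in H.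
  apply (Rmult_le_reg_l t); [exact Ht|]. nra.
Qed.

Lemma dpair_mono k v w : (forall y, Rabs (v y) <= w y) -> dpair k v v <= dpair k w w.
Proof.
  intros H. induction k as [|k IH]; simpl; [lra|]. specialize (H (d k)).
  pose proof (Rabs_pos (v (d k))).
  assert (v (d k) * v (d k) <= w (d k) * w (d k)).
  { pose proof (Rsqr_abs (v (d k))). unfold Rsqr in *. nra. }
  lra.
Qed.

Lemma dpair_small_coords k u e j : 0 < e -> dpair k u u < e * e -> (j < k)%nat ->
  Rabs (u (d j)) < e.
Proof.
  intros He Hk Hj.
  assert (Hsq : u (d j) * u (d j) <= dpair k u u).
  { clear Hk. induction k as [|k IH]; [lia|]. simpl.
    destruct (Nat.eq_dec j k) as [->|Hne].
    - pose proof (dpair_nonneg k u). lra.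
    - assert (j < k)%nat as Hjk by lia. pose proof (IH Hjk). nra. }
  apply Rnot_le_lt. intro Hle. pose proof (Rsqr_abs (u (d j))). unfold Rsqr in *. nra.
Qed.

End FinitePairing.

Section WeakStarDensity.
Variable X : NormedSpace.
Variable M : (X -> R) -> Prop.
Hypothesis HM : dual_subspace X M.
Hypothesis HMn : norming X M.
Variable d : nat -> X.

(* Variational inequality: if [m0] almost minimises [m |-> dpair k (g - m)]
   over the ball of radius [c] of [M] while [dpair k (g - m0) >= eta], then
   the vector [dvec k (g - m0)] separates [g] from that ball by [eta / 2].
   (Compare [m0] with the points [(1 - t) m0 + t m] of the ball.) *)
Lemma almost_minimiser_separates g c k eta t m0 : in_dual X g -> eta > 0 -> 0 < t <= 1 ->
  t * dpair X d k (fun y => 2 * c * ns_norm y) (fun y => 2 * c * ns_norm y) <= eta / 4 ->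
  in_ball X M c m0 -> eta <= dpair X d k (fun y => g y - m0 y) (fun y => g y - m0 y) ->
  (forall m, in_ball X M c m ->
     dpair X d k (fun y => g y - m0 y) (fun y => g y - m0 y) <=
     dpair X d k (fun y => g y - m y) (fun y => g y - m y) + t * (eta / 2)) ->
  forall m, in_ball X M c m ->
    m (dvec X d k (fun y => g y - m0 y)) <= g (dvec X d k (fun y => g y - m0 y)) - eta / 2.
Proof.
  intros Hg Heta Ht HtK Hm0 Haa Hmin m Hm.
  assert (Hm0d : in_dual X m0) by (apply HM, Hm0).
  assert (Hmd : in_dual X m) by (apply HM, Hm).
  set (a := fun y => g y - m0 y) in *.
  set (v := fun y => m y - m0 y).
  specialize (Hmin _ (ball_convex X M HM c m0 m t ltac:(lra) Hm0 Hm)).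
  assert (Hseg : (fun y => a y - t * v y) = (fun y => g y - ((1 - t) * m0 y + t * m y)))
    by (apply functional_extensionality; intro; unfold a, v; ring).
  pose proof (dpair_first_order X d k a v t (eta / 2) ltac:(lra)) as Hfo.
  rewrite Hseg in Hfo. specialize (Hfo Hmin).
  assert (Hvv : dpair X d k v v <= dpair X d k (fun y => 2 * c * ns_norm y)
                                                (fun y => 2 * c * ns_norm y)).
  { apply dpair_mono. intro y. destruct Hm as [_ Hb], Hm0 as [_ Hb0].
    unfold v, Rminus. eapply Rle_trans. apply Rabs_triang. rewrite Rabs_Ropp.
    specialize (Hb0 y). specialize (Hb y). lra. }
  assert (Hav : dpair X d k a v = dpair X d k a m - dpair X d k a m0) by apply dpair_sub_r.
  assert (Hag : dpair X d k a a = dpair X d k a g - dpair X d k a m0) by apply dpair_sub_r.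
  rewrite !dvec_eval by auto.
  apply (Rmult_le_compat_l t) in Hvv; lra.
Qed.

(* Otherwise an almost minimiser of [dpair k (g - m)] over the
   ball would give a vector separating [g] from the ball, which the norming
   property forbids. *)
Lemma ball_weak_star_dense g c k eta : in_dual X g -> 0 <= c ->
  (forall x, Rabs (g x) <= c * ns_norm x) -> eta > 0 ->
  exists m, in_ball X M c m /\ dpair X d k (fun y => g y - m y) (fun y => g y - m y) < eta.
Proof.
  intros Hg Hc Hgb Heta. apply NNPP; intro Hno.
  assert (Hfar : forall m, in_ball X M c m ->
            eta <= dpair X d k (fun y => g y - m y) (fun y => g y - m y)).
  { intros m Hm. apply Rnot_lt_le; intro Hl; apply Hno; eauto. }
  set (K := dpair X d k (fun y => 2 * c * ns_norm y) (fun y => 2 * c * ns_norm y)).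
  assert (HK : 0 <= K) by apply dpair_nonneg.
  set (t := eta / (4 * (K + eta + 1))).
  assert (Ht4 : t * (4 * (K + eta + 1)) = eta) by (unfold t; field; lra).
  assert (Htp : 0 < t) by (unfold t; apply Rdiv_lt_0_compat; lra).
  destruct (near_infimum (in_ball X M c)
              (fun m => dpair X d k (fun y => g y - m y) (fun y => g y - m y)) (t * (eta / 2)))
    as [m0 [Hm0 Hmin]].
  { exists (fun _ => 0). split; [apply HM|]. intro x. rewrite Rabs_R0.
    pose proof (norm_nonneg X x). nra. }
  { intros. apply dpair_nonneg. }
  { nra. }
  pose proof (almost_minimiser_separates g c k eta t m0 Hg Heta ltac:(nra) ltac:(fold K; nra)
                Hm0 (Hfar m0 Hm0) Hmin) as Hsep.
  set (x := dvec X d k (fun y => g y - m0 y)) in Hsep.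
  destruct (norming_witness X M HM c x (eta / 4) HMn Hc ltac:(lra)) as [m [Hm Hmx]].
  specialize (Hsep m Hm). pose proof (Hgb x). pose proof (Rle_abs (g x)). lra.
Qed.

Hypothesis Hd : forall x eps, eps > 0 -> exists n, ns_norm (ns_sub x (d n)) < eps.

Lemma weak_star_null_of_dense_small (u : nat -> X -> R) C : 0 <= C ->
  (forall n, in_dual X (u n)) -> (forall n x, Rabs (u n x) <= C * ns_norm x) ->
  (forall n j, (j < n)%nat -> Rabs (u n (d j)) < / (INR n + 1)) ->
  weak_star_null X u.
Proof.
  intros HC0 Hu HC Hsmall. split; auto. intros x eps Heps.
  destruct (Hd x (eps / (4 * (C + 1)))) as [j Hj].
  { apply Rdiv_lt_0_compat; lra. }
  destruct (inv_succ_small (eps / 2)) as [N0 HN0]; [lra|].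
  exists (max N0 (S j)). intros n Hn. unfold R_dist. rewrite Rminus_0_r.
  replace (u n x) with (u n (d j) + u n (ns_sub x (d j)))
    by (rewrite <- (proj1 (Hu n)), add_sub; reflexivity).
  assert (H1 : Rabs (u n (d j)) < eps / 2).
  { pose proof (Hsmall n j ltac:(lia)). pose proof (HN0 n ltac:(lia)). lra. }
  assert (H2 : Rabs (u n (ns_sub x (d j))) < eps / 2).
  { pose proof (HC n (ns_sub x (d j))). pose proof (norm_nonneg X (ns_sub x (d j))).
    assert (E : eps / (4 * (C + 1)) * (4 * (C + 1)) = eps) by (field; lra).
    nra. }
  eapply Rle_lt_trans. apply Rabs_triang. lra.
Qed.

Lemma norming_weak_star_approx g : in_dual X g ->
  exists ms : nat -> X -> R, (forall n, in_ball X M (dnorm X g) (ms n)) /\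
    weak_star_null X (fun n x => ms n x - g x).
Proof.
  intros Hg. set (N := dnorm X g).
  assert (HN0 : 0 <= N) by (apply dnorm_nonneg; auto).
  assert (Hgb : forall x, Rabs (g x) <= N * ns_norm x) by (intro; apply dnorm_bound; auto).
  assert (Hs : forall n : nat, exists m, in_ball X M N m /\
      dpair X d n (fun y => g y - m y) (fun y => g y - m y) < / (INR n + 1) * / (INR n + 1)).
  { intro n. apply ball_weak_star_dense; auto. pose proof (inv_succ_pos n). nra. }
  destruct (choice _ Hs) as [ms Hms].
  exists ms. split; [intro n; apply Hms|].
  apply (weak_star_null_of_dense_small _ (2 * N)); [lra| | |].
  - intro n. apply in_dual_sub; auto. apply HM, Hms.
  - intros n x. destruct (Hms n) as [[_ Hb] _].
    unfold Rminus. eapply Rle_trans. apply Rabs_triang. rewrite Rabs_Ropp.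
    specialize (Hb x). specialize (Hgb x). lra.
  - intros n j Hj. rewrite Rabs_minus_sym.
    apply (dpair_small_coords X d n (fun y => g y - ms n y)); auto using inv_succ_pos.
    apply Hms.
Qed.

End WeakStarDensity.

Lemma closed_subspace_dist_pos (X : NormedSpace) (M : (X -> R) -> Prop) f :
  dual_subspace X M -> dual_norm_closed X M -> in_dual X f -> ~ M f ->
  exists r, r > 0 /\ forall m, M m -> r <= dnorm X (fun x => f x - m x).
Proof.
  intros HM Hcl Hf Hnf. apply NNPP; intro Hnr.
  assert (Hs : forall n : nat, exists m, M m /\ dnorm X (fun x => f x - m x) < / (INR n + 1)).
  { intro n. apply NNPP; intro Hn'. apply Hnr. exists (/ (INR n + 1)).
    split; [apply inv_succ_pos|]. intros m Hm. apply Rnot_lt_le. intro. apply Hn'. eauto. }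
  destruct (choice _ Hs) as [u Hu].
  apply Hnf, (Hcl u f); auto; [intro n; apply Hu|].
  intros eps Heps. destruct (inv_succ_small eps Heps) as [N HN]. exists N. intros n Hn.
  destruct (Hu n) as [Hun Hlt]. assert (Hund : in_dual X (u n)) by (apply HM; auto).
  unfold R_dist. rewrite Rminus_0_r, Rabs_right.
  - rewrite dnorm_sub_sym by auto. specialize (HN n Hn). lra.
  - apply Rle_ge, dnorm_nonneg, in_dual_sub; auto.
Qed.

(* Suppose [f] lies at distance [r > 0] from [M] and [m0] in [M] almost
   realises it; set [g = f - m0] and [N = dnorm X g].  A weak-star null
   perturbation [h_n = m_n - g] with [m_n] in the [N]-ball of [M] gives
   [||g + h_n|| <= N] while [||g - h_n|| = 2 ||f - (m0 + m_n / 2)||] is at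
   least [2 r] and at least [2 N - r]; the two norms thus differ by at least
   [r / 2], contradicting property (au-star). *)
Lemma no_proper_norming_subspace (X : NormedSpace) :
  separable X -> property_au_star X ->
  forall M : (X -> R) -> Prop,
    dual_subspace X M -> dual_norm_closed X M -> norming X M ->
    forall f : X -> R, in_dual X f -> M f.
Proof.
  intros [d Hd] Hau M HM Hcl Hn f Hf. apply NNPP; intro Hnf.
  destruct (closed_subspace_dist_pos X M f HM Hcl Hf Hnf) as [r [Hr Hrm]].
  destruct (near_infimum M (fun m => dnorm X (fun x => f x - m x)) (r / 2))
    as [m0 [Hm0 Hmin]].
  { exists (fun _ => 0). apply HM. }
  { intros m Hm. apply dnorm_nonneg, in_dual_sub; auto. apply HM; auto. }
  { lra. }
  assert (Hm0d : in_dual X m0) by (apply HM; auto).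
  set (g := fun x => f x - m0 x).
  assert (Hg : in_dual X g) by (apply in_dual_sub; auto).
  set (N := dnorm X g).
  destruct (norming_weak_star_approx X M HM Hn d Hd g Hg) as [ms [Hms Hnull]].
  set (h := fun n x => ms n x - g x).
  destruct (Hau g h Hg Hnull (r / 2) ltac:(lra)) as [n Hgap].
  specialize (Hgap n (le_n _)). unfold R_dist in Hgap. rewrite Rminus_0_r in Hgap.
  destruct (Hms n) as [Mmn Hbn].
  assert (Hplus : dnorm X (fun x => g x + h n x) <= N).
  { rewrite (dnorm_ext X _ (ms n)) by (intro; unfold h; ring).
    apply dnorm_le; [apply HM; auto | apply dnorm_nonneg; auto | exact Hbn]. }
  set (p := fun x => 1 * m0 x + / 2 * ms n x).
  assert (Hp : M p) by (apply subspace_comb; auto).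
  assert (Hminus : 2 * r <= dnorm X (fun x => g x - h n x) /\
                   2 * (N - r / 2) <= dnorm X (fun x => g x - h n x)).
  { rewrite (dnorm_ext X _ (fun x => 2 * (f x - p x))) by (intro; unfold h, g, p; field).
    pose proof (dnorm_scal_ge X (fun x => f x - p x) 2
                  ltac:(apply in_dual_sub; auto; apply HM; auto) ltac:(lra)).
    specialize (Hrm p Hp). specialize (Hmin p Hp). fold g N in Hmin. lra. }
  pose proof (Rle_abs (- (dnorm X (fun x => g x + h n x) - dnorm X (fun x => g x - h n x))))
    as Habs.
  rewrite Rabs_Ropp in Habs. lra.
Qed.

Section HahnBanach.
Variable X : NormedSpace.
Implicit Types x y z v w : X.

Definition is_subspace (V : X -> Prop) : Prop :=
  V ns_zero /\ (forall v w, V v -> V w -> V (ns_add v w)) /\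
  (forall a v, V v -> V (ns_scal a v)).

Definition dominated (V : X -> Prop) (phi : X -> R) : Prop :=
  (forall v w, V v -> V w -> phi (ns_add v w) = phi v + phi w) /\
  (forall a v, V v -> phi (ns_scal a v) = a * phi v) /\
  (forall v, V v -> phi v <= ns_norm v).

Section OneStep.
Variable V : X -> Prop.
Variable phi : X -> R.
Hypothesis HV : is_subspace V.
Hypothesis Hphi : dominated V phi.

Lemma dominated_zero : phi ns_zero = 0.
Proof.
  destruct HV as [HV0 _], Hphi as [_ [Hs _]].
  rewrite <- (scal_zero_l X ns_zero), Hs by auto. ring.
Qed.

Lemma dominated_sub v w : V v -> V w -> phi (ns_sub v w) = phi v - phi w.
Proof.
  intros Hv Hw. destruct HV as [_ [_ Hsc]], Hphi as [Ha [Hs _]].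
  unfold ns_sub. rewrite opp_scal, Ha, Hs by auto. ring.
Qed.

Lemma dominated_abs v : V v -> Rabs (phi v) <= ns_norm v.
Proof.
  intros Hv. destruct HV as [_ [_ Hsc]], Hphi as [_ [Hs Hb]].
  pose proof (Hb v Hv). pose proof (Hb _ (Hsc (-1) v Hv)) as Hneg.
  rewrite Hs, ns_norm_scal, Rabs_left in Hneg by (auto; lra).
  apply Rabs_le. lra.
Qed.

(* The value given to a new direction [y]: any number between
   [sup (phi v - ||v + y||)] and [inf (||v - y|| - phi v)]; we take the
   negative of the supremum, so that [phi v + ext_value y <= ||v + y||]. *)
Definition ext_value (y : X) : R :=
  - epsilon (inhabits 0) (is_lub (fun r => exists v, V v /\ r = phi v - ns_norm (ns_add v y))).

Lemma ext_value_lub y :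
  is_lub (fun r => exists v, V v /\ r = phi v - ns_norm (ns_add v y)) (- ext_value y).
Proof.
  unfold ext_value. rewrite Ropp_involutive. apply epsilon_spec.
  destruct HV as [HV0 _], Hphi as [_ [_ Hb]].
  destruct (completeness (fun r => exists v, V v /\ r = phi v - ns_norm (ns_add v y)))
    as [L HL].
  - exists (ns_norm (ns_opp y)). intros r [v [Hv ->]].
    pose proof (ns_norm_triangle X (ns_add v y) (ns_opp y)) as Ht.
    fold (ns_sub (ns_add v y) y) in Ht. rewrite add_sub_cancel_r in Ht.
    pose proof (Hb v Hv). lra.
  - exists (phi ns_zero - ns_norm (ns_add ns_zero y)). eauto.
  - exists L. exact HL.
Qed.

Lemma ext_value_spec y v : V v ->
  phi v + ext_value y <= ns_norm (ns_add v y) /\ phi v - ext_value y <= ns_norm (ns_sub v y).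
Proof.
  intros Hv. destruct (ext_value_lub y) as [Hub Hl].
  destruct HV as [_ [Ha _]], Hphi as [Hpa [_ Hb]]. split.
  - assert (phi v - ns_norm (ns_add v y) <= - ext_value y) by (apply Hub; eauto). lra.
  - enough (- ext_value y <= ns_norm (ns_sub v y) - phi v) by lra.
    apply Hl. intros r [w [Hw ->]].
    assert (E : ns_add (ns_add w y) (ns_sub v y) = ns_add w v).
    { unfold ns_sub. rewrite add_add_swap, ns_add_opp, ns_add_zero. reflexivity. }
    pose proof (ns_norm_triangle X (ns_add w y) (ns_sub v y)) as Ht. rewrite E in Ht.
    pose proof (Hb _ (Ha w v Hw Hv)). rewrite Hpa in * by auto. lra.
Qed.

Lemma ext_value_in y : V y -> ext_value y = phi y.
Proof.
  intros Hy. destruct HV as [_ [_ Hsc]], Hphi as [_ [Hs _]].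
  pose proof (ext_value_spec y y Hy) as [_ A1].
  pose proof (ext_value_spec y _ (Hsc (-1) y Hy)) as [A2 _].
  unfold ns_sub in A1. rewrite ns_add_opp, norm_zero in A1.
  rewrite ns_add_comm, add_neg_scal, norm_zero, Hs in A2 by auto. lra.
Qed.

Definition span_with (y : X) : X -> Prop :=
  fun z => exists v t, V v /\ z = ns_add v (ns_scal t y).

Definition extend (y : X) : X -> R :=
  fun z => epsilon (inhabits 0)
    (fun r => exists v t, V v /\ z = ns_add v (ns_scal t y) /\ r = phi v + t * ext_value y).

Lemma extend_well_defined y v t v' t' : V v -> V v' ->
  ns_add v (ns_scal t y) = ns_add v' (ns_scal t' y) ->
  phi v + t * ext_value y = phi v' + t' * ext_value y.
Proof.
  intros Hv Hv' E. apply sub_add_scal_eq in E.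
  destruct HV as [_ [_ Hsc]], Hphi as [_ [Hs _]].
  destruct (Req_dec (t' - t) 0) as [Z|Z].
  - rewrite Z, scal_zero_l in E.
    assert (Hz : phi (ns_sub v v') = 0) by (rewrite E; apply dominated_zero).
    rewrite dominated_sub in Hz by auto. replace t' with t by lra. lra.
  - assert (Ey : y = ns_scal (/ (t' - t)) (ns_sub v v')).
    { rewrite E, ns_scal_assoc, Rinv_l, ns_scal_one by auto. reflexivity. }
    assert (Vy : V y).
    { rewrite Ey. apply Hsc. unfold ns_sub. rewrite opp_scal. apply HV; auto. }
    assert (Q : phi (ns_sub v v') = (t' - t) * phi y) by (rewrite E, Hs; auto).
    rewrite dominated_sub in Q by auto. rewrite ext_value_in by auto. lra.
Qed.

Lemma extend_value y v t : V v -> extend y (ns_add v (ns_scal t y)) = phi v + t * ext_value y.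
Proof.
  intros Hv. unfold extend.
  match goal with |- epsilon ?i ?P = _ => assert (HP : P (epsilon i P)) end.
  { apply epsilon_spec. exists (phi v + t * ext_value y), v, t. auto. }
  destruct HP as [v' [t' [Hv' [E ->]]]]. symmetry. apply extend_well_defined; auto.
Qed.

Lemma span_with_subspace y : is_subspace (span_with y).
Proof.
  destruct HV as [HV0 [Ha Hsc]]. split; [|split].
  - exists ns_zero, 0. rewrite scal_zero_l, ns_add_zero. auto.
  - intros z1 z2 [v1 [t1 [Hv1 ->]]] [v2 [t2 [Hv2 ->]]]. exists (ns_add v1 v2), (t1 + t2).
    rewrite add_add_swap, ns_scal_distr_r. auto.
  - intros a z [v [t [Hv ->]]]. exists (ns_scal a v), (a * t).
    rewrite ns_scal_distr_l, ns_scal_assoc. auto.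
Qed.

Lemma span_with_incl y v : V v -> span_with y v.
Proof. intros Hv. exists v, 0. rewrite scal_zero_l, ns_add_zero. auto. Qed.

Lemma span_with_new y : span_with y y.
Proof. exists ns_zero, 1. rewrite ns_scal_one, add_zero_l. split; [apply HV | auto]. Qed.

Lemma extend_agrees y v : V v -> extend y v = phi v.
Proof.
  intros Hv. replace v with (ns_add v (ns_scal 0 y)) at 1
    by (rewrite scal_zero_l, ns_add_zero; auto).
  rewrite extend_value by auto. ring.
Qed.

(* Domination of the extension: for [t > 0] rescale [ext_value_spec] at
   [v / t]; for [t < 0] use its second inequality at [v / |t|]. *)
Lemma extend_bound y v t : V v -> phi v + t * ext_value y <= ns_norm (ns_add v (ns_scal t y)).
Proof.
  intros Hv. destruct HV as [_ [_ Hsc]], Hphi as [_ [Hs _]].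
  destruct (Rtotal_order t 0) as [Hn|[->|Hpos]].
  - set (s := - t). assert (Hsp : 0 < s) by (unfold s; lra).
    destruct (ext_value_spec y _ (Hsc (/ s) v Hv)) as [_ A]. rewrite Hs in A by auto.
    assert (E : ns_add v (ns_scal t y) = ns_scal s (ns_sub (ns_scal (/ s) v) y)).
    { unfold ns_sub. rewrite opp_scal, ns_scal_distr_l, !ns_scal_assoc, Rinv_r, ns_scal_one by lra.
      do 2 f_equal. unfold s; ring. }
    rewrite E, ns_norm_scal, Rabs_right by lra.
    apply (Rmult_le_compat_l s) in A; [|lra].
    replace (s * (/ s * phi v - ext_value y)) with (phi v - s * ext_value y) in A by (field; lra).
    unfold s in *. lra.
  - rewrite scal_zero_l, ns_add_zero, Rmult_0_l, Rplus_0_r. apply Hphi; auto.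
  - destruct (ext_value_spec y _ (Hsc (/ t) v Hv)) as [A _]. rewrite Hs in A by auto.
    assert (E : ns_add v (ns_scal t y) = ns_scal t (ns_add (ns_scal (/ t) v) y)).
    { rewrite ns_scal_distr_l, ns_scal_assoc, Rinv_r, ns_scal_one by lra. reflexivity. }
    rewrite E, ns_norm_scal, Rabs_right by lra.
    apply (Rmult_le_compat_l t) in A; [|lra].
    replace (t * (/ t * phi v + ext_value y)) with (phi v + t * ext_value y) in A by (field; lra).
    lra.
Qed.

Lemma extend_dominated y : dominated (span_with y) (extend y).
Proof.
  destruct HV as [_ [Ha Hsc]], Hphi as [Hpa [Hps _]]. split; [|split].
  - intros z1 z2 [v1 [t1 [Hv1 ->]]] [v2 [t2 [Hv2 ->]]].
    rewrite add_add_swap, <- ns_scal_distr_r, !extend_value, Hpa by auto. ring.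
  - intros a z [v [t [Hv ->]]].
    rewrite ns_scal_distr_l, ns_scal_assoc, !extend_value, Hps by auto. ring.
  - intros z [v [t [Hv ->]]]. rewrite extend_value by auto. apply extend_bound; auto.
Qed.

End OneStep.

Section Chain.
Variable x0 : X.
Variable d : nat -> X.

Definition direction (n : nat) : X := match n with O => x0 | S n => d n end.

Fixpoint chain (n : nat) : (X -> Prop) * (X -> R) :=
  match n with
  | O => (fun z => z = ns_zero, fun _ => 0)
  | S n => (span_with (fst (chain n)) (direction n),
            extend (fst (chain n)) (snd (chain n)) (direction n))
  end.

Definition chain_space (n : nat) : X -> Prop := fst (chain n).
Definition chain_fun (n : nat) : X -> R := snd (chain n).

Lemma chain_invariant n : is_subspace (chain_space n) /\ dominated (chain_space n) (chain_fun n).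
Proof.
  induction n as [|n [IH1 IH2]].
  - unfold chain_space, chain_fun; simpl. split; [split; [|split] | split; [|split]].
    + reflexivity.
    + intros v w -> ->. apply ns_add_zero.
    + intros a v ->. apply scal_zero_r.
    + intros; ring.
    + intros; ring.
    + intros. apply norm_nonneg.
  - unfold chain_space, chain_fun in *; simpl.
    split; [apply span_with_subspace | apply extend_dominated]; auto.
Qed.

Lemma chain_mono m n v : (m <= n)%nat -> chain_space m v ->
  chain_space n v /\ chain_fun n v = chain_fun m v.
Proof.
  intros Hmn Hv. induction Hmn as [|n Hmn IH]; [auto|].
  destruct IH as [Hn E]. destruct (chain_invariant n) as [HV Hphi].
  unfold chain_space, chain_fun in *; simpl. split.
  - apply span_with_incl; auto.
  - rewrite extend_agrees; auto.
Qed.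

Lemma direction_in n : chain_space (S n) (direction n).
Proof. unfold chain_space; simpl. apply span_with_new, chain_invariant. Qed.

Lemma chain_fun_x0 : chain_fun 1 x0 = ns_norm x0.
Proof.
  destruct (chain_invariant 0) as [HV Hphi]. unfold chain_space, chain_fun in *; simpl in *.
  replace x0 with (ns_add ns_zero (ns_scal 1 x0)) at 2
    by (rewrite ns_scal_one, add_zero_l; auto).
  rewrite extend_value by (auto; reflexivity).
  destruct (ext_value_lub _ _ HV Hphi x0) as [Hub Hl].
  assert (A1 : 0 - ns_norm x0 <= - ext_value (fun z => z = ns_zero) (fun _ => 0) x0)
    by (apply Hub; exists ns_zero; rewrite add_zero_l; auto).
  assert (A2 : - ext_value (fun z => z = ns_zero) (fun _ => 0) x0 <= 0 - ns_norm x0).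
  { apply Hl. intros r [v [-> ->]]. rewrite add_zero_l. lra. }
  lra.
Qed.

Definition in_union (z : X) : Prop := exists n, chain_space n z.

Definition limit_fun (z : X) : R :=
  chain_fun (epsilon (inhabits 0%nat) (fun n => chain_space n z)) z.

Lemma limit_fun_val n z : chain_space n z -> limit_fun z = chain_fun n z.
Proof.
  intros Hz. unfold limit_fun. set (k := epsilon (inhabits 0%nat) (fun n => chain_space n z)).
  assert (Hk : chain_space k z) by (apply epsilon_spec; eauto).
  destruct (chain_mono k (max k n) z ltac:(lia) Hk) as [_ A].
  destruct (chain_mono n (max k n) z ltac:(lia) Hz) as [_ B]. congruence.
Qed.

Lemma union_zero : in_union ns_zero.
Proof. exists 0%nat. reflexivity. Qed.

Lemma union_add v w : in_union v -> in_union w ->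
  in_union (ns_add v w) /\ limit_fun (ns_add v w) = limit_fun v + limit_fun w.
Proof.
  intros [n Hv] [m Hw].
  destruct (chain_mono n (max n m) v ltac:(lia) Hv) as [Hv' _].
  destruct (chain_mono m (max n m) w ltac:(lia) Hw) as [Hw' _].
  destruct (chain_invariant (max n m)) as [[_ [Ha _]] [Hpa _]].
  split; [exists (max n m); auto|]. rewrite !(limit_fun_val (max n m)); auto.
Qed.

Lemma union_scal a v : in_union v ->
  in_union (ns_scal a v) /\ limit_fun (ns_scal a v) = a * limit_fun v.
Proof.
  intros [n Hv]. destruct (chain_invariant n) as [[_ [_ Hs]] [_ [Hps _]]].
  split; [exists n; auto|]. rewrite !(limit_fun_val n); auto.
Qed.

Lemma limit_fun_lipschitz w w' : in_union w -> in_union w' ->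
  limit_fun w' - limit_fun w <= ns_norm (ns_sub w' w).
Proof.
  intros Hw Hw'. destruct (union_scal (-1) w Hw) as [A B].
  destruct (union_add w' _ Hw' A) as [[n C] D].
  destruct (chain_invariant n) as [HV Hphi].
  pose proof (dominated_abs _ _ HV Hphi _ C) as Habs. rewrite <- (limit_fun_val n) in Habs by auto.
  unfold ns_sub. rewrite opp_scal. rewrite D, B in Habs.
  pose proof (Rle_abs (limit_fun w' + -1 * limit_fun w)). lra.
Qed.

Lemma limit_fun_abs w : in_union w -> Rabs (limit_fun w) <= ns_norm w.
Proof.
  intros [n Hw]. destruct (chain_invariant n) as [HV Hphi].
  rewrite (limit_fun_val n) by auto. apply (dominated_abs _ _ HV Hphi); auto.
Qed.

Definition lipschitz_ext (x : X) : R :=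
  epsilon (inhabits 0)
    (is_lub (fun r => exists w, in_union w /\ r = limit_fun w - ns_norm (ns_sub x w))).

Lemma lipschitz_ext_sandwich x w : in_union w ->
  limit_fun w - ns_norm (ns_sub x w) <= lipschitz_ext x <= limit_fun w + ns_norm (ns_sub x w).
Proof.
  intros Hw.
  assert (UB : forall w1 w2, in_union w1 -> in_union w2 ->
     limit_fun w1 - ns_norm (ns_sub x w1) <= limit_fun w2 + ns_norm (ns_sub x w2)).
  { intros w1 w2 H1 H2. pose proof (limit_fun_lipschitz w2 w1 H2 H1).
    pose proof (norm_sub_triangle X w1 x w2). rewrite (norm_sub_sym X w1 x) in *. lra. }
  assert (HL : is_lub (fun r => exists w, in_union w /\ r = limit_fun w - ns_norm (ns_sub x w))
                      (lipschitz_ext x)).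
  { unfold lipschitz_ext. apply epsilon_spec.
    destruct (completeness (fun r => exists w, in_union w /\
                                       r = limit_fun w - ns_norm (ns_sub x w))) as [L HL].
    - exists (limit_fun ns_zero + ns_norm (ns_sub x ns_zero)).
      intros r [w1 [H1 ->]]. apply UB; auto using union_zero.
    - exists (limit_fun ns_zero - ns_norm (ns_sub x ns_zero)), ns_zero. auto using union_zero.
    - exists L; auto. }
  destruct HL as [Hub Hl]. split.
  - apply Hub. eauto.
  - apply Hl. intros r [w1 [H1 ->]]. apply UB; auto.
Qed.

End Chain.
End HahnBanach.

Section SeparableExtension.
Variable X : NormedSpace.
Variable x0 : X.
Variable d : nat -> X.
Hypothesis Hd : forall x eps, eps > 0 -> exists n, ns_norm (ns_sub x (d n)) < eps.

Local Notation W := (in_union X x0 d).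
Local Notation Phi := (limit_fun X x0 d).
Local Notation G := (lipschitz_ext X x0 d).

Lemma union_dense x eps : eps > 0 -> exists w, W w /\ ns_norm (ns_sub x w) < eps.
Proof.
  intros He. destruct (Hd x eps He) as [n Hn]. exists (d n). split; auto.
  exists (S (S n)). apply (direction_in X x0 d (S n)).
Qed.

Lemma ext_close x w : W w -> Rabs (G x - Phi w) <= ns_norm (ns_sub x w).
Proof. intros Hw. apply Rabs_le. pose proof (lipschitz_ext_sandwich X x0 d x w Hw). lra. Qed.

Lemma ext_norm_bound x : Rabs (G x) <= ns_norm x.
Proof.
  apply le_epsilon_le. intros eps He. destruct (union_dense x (eps / 2) ltac:(lra)) as [w [Hw Hxw]].
  pose proof (Rabs_le_between _ _ (ext_close x w Hw)).
  pose proof (Rabs_le_between _ _ (limit_fun_abs X x0 d w Hw)).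
  pose proof (norm_reverse_triangle X w x) as Hrev. rewrite (norm_sub_sym X w x) in Hrev.
  apply Rabs_le. lra.
Qed.

Lemma ext_additive x y : G (ns_add x y) = G x + G y.
Proof.
  apply eq_epsilon_eq. intros eps He.
  destruct (union_dense x (eps / 4) ltac:(lra)) as [w1 [H1 E1]].
  destruct (union_dense y (eps / 4) ltac:(lra)) as [w2 [H2 E2]].
  destruct (union_add X x0 d w1 w2 H1 H2) as [H12 P12].
  pose proof (Rabs_le_between _ _ (ext_close (ns_add x y) _ H12)) as S12.
  pose proof (Rabs_le_between _ _ (ext_close x _ H1)) as S1.
  pose proof (Rabs_le_between _ _ (ext_close y _ H2)) as S2.
  rewrite sub_add_distr, P12 in S12.
  pose proof (ns_norm_triangle X (ns_sub x w1) (ns_sub y w2)).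
  apply Rabs_le. lra.
Qed.

Lemma ext_homogeneous a x : G (ns_scal a x) = a * G x.
Proof.
  apply eq_epsilon_eq. intros eps He. pose proof (Rabs_pos a) as Ha.
  set (e := eps / (2 * (Rabs a + 1))).
  assert (He' : e > 0) by (unfold e; apply Rdiv_lt_0_compat; lra).
  assert (Ee : e * (2 * (Rabs a + 1)) = eps) by (unfold e; field; lra).
  destruct (union_dense x e He') as [w [Hw Ew]].
  destruct (union_scal X x0 d a w Hw) as [Haw Paw].
  pose proof (ext_close (ns_scal a x) _ Haw) as A1.
  pose proof (ext_close x _ Hw) as A2.
  rewrite sub_scal, ns_norm_scal, Paw in A1.
  replace (G (ns_scal a x) - a * G x)
    with ((G (ns_scal a x) - a * Phi w) - a * (G x - Phi w)) by ring.
  eapply Rle_trans. apply Rabs_triang. rewrite Rabs_Ropp, Rabs_mult.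
  pose proof (norm_nonneg X (ns_sub x w)).
  assert (Rabs a * Rabs (G x - Phi w) <= Rabs a * ns_norm (ns_sub x w))
    by (apply Rmult_le_compat_l; lra).
  assert (Rabs a * ns_norm (ns_sub x w) <= Rabs a * e) by (apply Rmult_le_compat_l; lra).
  nra.
Qed.

Lemma ext_x0 : G x0 = ns_norm x0.
Proof.
  assert (Hx0 : W x0) by (exists 1%nat; apply (direction_in X x0 d 0)).
  pose proof (Rabs_le_between _ _ (ext_close x0 x0 Hx0)) as S.
  unfold ns_sub in S. rewrite ns_add_opp, norm_zero in S.
  rewrite (limit_fun_val X x0 d 1), chain_fun_x0 in S by apply (direction_in X x0 d 0).
  lra.
Qed.

End SeparableExtension.

Lemma hahn_banach_separable (X : NormedSpace) : separable X -> forall x0 : X,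
  exists g, in_dual X g /\ (forall x, Rabs (g x) <= ns_norm x) /\ g x0 = ns_norm x0.
Proof.
  intros [d Hd] x0. exists (lipschitz_ext X x0 d).
  split; [split; [|split]|split].
  - apply ext_additive; auto.
  - apply ext_homogeneous; auto.
  - exists 1. intro x. rewrite Rmult_1_l. apply ext_norm_bound; auto.
  - apply ext_norm_bound; auto.
  - apply ext_x0; auto.
Qed.

(** The functionals [gs j] norming the points [d j] of a dense
    sequence span a norming subspace; its closure is all of the dual, and
    rational combinations of the [gs j] are dense in it. *)

(* Every finite sequence of naturals is an initial segment of [nat_seq n]
   for some code [n] (iterated Cantor pairing). *)
Fixpoint nat_seq (n i : nat) : nat :=
  match i with O => fst (of_nat n) | S i => nat_seq (snd (of_nat n)) i end.

Lemma nat_seq_surj (z : nat -> nat) k : exists n, forall i, (i < k)%nat -> nat_seq n i = z i.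
Proof.
  revert z. induction k as [|k IH]; intros z.
  - exists 0%nat. intros; lia.
  - destruct (IH (fun i => z (S i))) as [n' Hn']. exists (to_nat (z 0%nat, n')).
    intros [|i] Hi; cbn [nat_seq]; rewrite cancel_of_to; cbn [fst snd]; auto. apply Hn'. lia.
Qed.

(* The rational numbers with denominator [k + 1] coded by [n]. *)
Definition rat_coef (k n i : nat) : R :=
  (INR (nat_seq n (2 * i)) - INR (nat_seq n (2 * i + 1))) / (INR k + 1).

Lemma INR_Zsplit (z : Z) : INR (Z.to_nat z) - INR (Z.to_nat (- z)) = IZR z.
Proof.
  rewrite !INR_IZR_INZ. destruct (Z_le_gt_dec 0 z).
  - rewrite Z2Nat.id by lia. replace (Z.to_nat (- z)) with 0%nat by lia. simpl. ring.
  - rewrite (Z2Nat.id (- z)) by lia. replace (Z.to_nat z) with 0%nat by lia.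
    rewrite opp_IZR. simpl. ring.
Qed.

Lemma rat_coef_surj (z : nat -> Z) K :
  exists n, forall i, (i < K)%nat -> rat_coef K n i = IZR (z i) / (INR K + 1).
Proof.
  set (zc := fun m => if Nat.even m then Z.to_nat (z (Nat.div2 m))
                      else Z.to_nat (- z (Nat.div2 m))).
  destruct (nat_seq_surj zc (2 * K)) as [n Hn]. exists n. intros i Hi.
  unfold rat_coef. rewrite !Hn by lia. unfold zc.
  replace (Nat.even (2 * i)) with true by (symmetry; apply Nat.even_mul; auto).
  replace (Nat.even (2 * i + 1)) with false by (rewrite Nat.even_add, Nat.even_mul; reflexivity).
  rewrite Nat.div2_double.
  replace (2 * i + 1)%nat with (S (2 * i)) by lia. rewrite Nat.div2_succ_double.
  rewrite INR_Zsplit. reflexivity.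
Qed.

Lemma round_error r K :
  Rabs (r - IZR (up (r * (INR K + 1))) / (INR K + 1)) <= / (INR K + 1).
Proof.
  pose proof (inv_succ_pos K). pose proof (pos_INR K).
  destruct (archimed (r * (INR K + 1))) as [A1 A2].
  replace (r - IZR (up (r * (INR K + 1))) / (INR K + 1))
    with ((r * (INR K + 1) - IZR (up (r * (INR K + 1)))) * / (INR K + 1)) by (field; lra).
  rewrite Rabs_mult, (Rabs_right (/ _)) by lra.
  rewrite <- (Rmult_1_l (/ (INR K + 1))) at 2. apply Rmult_le_compat_r; [lra|].
  apply Rabs_le. lra.
Qed.

Section DualSeparability.
Variable X : NormedSpace.
Variable gs : nat -> X -> R.
Hypothesis Hgd : forall i, in_dual X (gs i).
Hypothesis Hgb : forall i x, Rabs (gs i x) <= ns_norm x.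

Fixpoint comb (k : nat) (r : nat -> R) (x : X) : R :=
  match k with O => 0 | S k => comb k r x + r k * gs k x end.

Lemma comb_dual k r : in_dual X (comb k r).
Proof.
  induction k as [|k IH]; simpl; [apply in_dual_zero|].
  apply (in_dual_ext X (fun x => 1 * comb k r x + r k * gs k x)); [intro; ring|].
  apply in_dual_comb; auto.
Qed.

Lemma comb_ext k r s x : (forall i, (i < k)%nat -> r i = s i) -> comb k r x = comb k s x.
Proof.
  intros H. induction k as [|k IH]; simpl; auto.
  rewrite IH by (intros; apply H; lia). rewrite H by lia. reflexivity.
Qed.

Definition trunc (k : nat) (r : nat -> R) (i : nat) : R := if Nat.ltb i k then r i else 0.

Lemma comb_trunc k r K x : (k <= K)%nat -> comb K (trunc k r) x = comb k r x.
Proof.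
  intros H. induction H as [|K H IH].
  - apply comb_ext. intros i Hi. unfold trunc. apply Nat.ltb_lt in Hi. rewrite Hi. auto.
  - simpl. rewrite IH. unfold trunc. replace (Nat.ltb K k) with false; [ring|].
    symmetry. apply Nat.ltb_ge. auto.
Qed.

Lemma comb_add k r s x : comb k r x + comb k s x = comb k (fun i => r i + s i) x.
Proof. induction k as [|k IH]; simpl; [|rewrite <- IH]; ring. Qed.

Lemma comb_sub k r s x : comb k r x - comb k s x = comb k (fun i => r i - s i) x.
Proof. induction k as [|k IH]; simpl; [|rewrite <- IH]; ring. Qed.

Lemma comb_scal k r a x : a * comb k r x = comb k (fun i => a * r i) x.
Proof. induction k as [|k IH]; simpl; [|rewrite <- IH]; ring. Qed.

Lemma comb_small k e delta x : 0 <= delta -> (forall i, (i < k)%nat -> Rabs (e i) <= delta) ->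
  Rabs (comb k e x) <= INR k * delta * ns_norm x.
Proof.
  intros Hd He. pose proof (norm_nonneg X x). induction k as [|k IH]; cbn [comb].
  - rewrite Rabs_R0. simpl. lra.
  - eapply Rle_trans. apply Rabs_triang. rewrite Rabs_mult, S_INR.
    specialize (IH ltac:(intros; apply He; lia)).
    pose proof (He k ltac:(lia)). pose proof (Hgb k x).
    pose proof (Rabs_pos (e k)). pose proof (Rabs_pos (gs k x)).
    assert (Rabs (e k) * Rabs (gs k x) <= delta * ns_norm x) by (apply Rmult_le_compat; lra).
    nra.
Qed.

Definition rat_comb (N : nat) : X -> R :=
  comb (fst (of_nat N)) (rat_coef (fst (of_nat N)) (snd (of_nat N))).

Lemma rat_comb_dense k r eps : eps > 0 ->
  exists N, dnorm X (fun x => comb k r x - rat_comb N x) < eps.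
Proof.
  intros He. pose proof (pos_INR k).
  destruct (inv_succ_small (eps / (INR k + 1))) as [K0 HK0].
  { apply Rdiv_lt_0_compat; lra. }
  set (K := max K0 k). pose proof (inv_succ_pos K).
  set (z := fun i => if Nat.ltb i k then up (r i * (INR K + 1)) else 0%Z).
  set (q := fun i => IZR (z i) / (INR K + 1)).
  destruct (rat_coef_surj z K) as [n Hn].
  exists (to_nat (K, n)). unfold rat_comb. rewrite cancel_of_to. cbn [fst snd].
  assert (Hq : forall x, comb K (rat_coef K n) x = comb k q x).
  { intro x. rewrite (comb_ext K _ q x Hn), <- (comb_trunc k q K x) by lia.
    apply comb_ext. intros i _. unfold trunc, q, z.
    destruct (Nat.ltb i k); [reflexivity|]. unfold Rdiv. ring. }
  apply Rle_lt_trans with (INR k * / (INR K + 1)).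
  - apply dnorm_le; [apply in_dual_sub; apply comb_dual | apply Rmult_le_pos; lra |].
    intro x. rewrite Hq, comb_sub. apply comb_small; [lra|].
    intros i Hi. unfold q, z. apply Nat.ltb_lt in Hi. rewrite Hi. apply round_error.
  - specialize (HK0 K ltac:(lia)).
    apply (Rmult_lt_compat_l (INR k + 1)) in HK0; [|lra].
    replace ((INR k + 1) * (eps / (INR k + 1))) with eps in HK0 by (field; lra).
    nra.
Qed.

Definition in_closed_span (f : X -> R) : Prop :=
  in_dual X f /\ forall eps, eps > 0 -> exists k r, dnorm X (fun x => f x - comb k r x) < eps.

Lemma closed_span_add f h : in_closed_span f -> in_closed_span h ->
  in_closed_span (fun x => f x + h x).
Proof.
  intros [Hf Af] [Hh Ah]. split; [apply in_dual_add; auto|]. intros eps He.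
  destruct (Af (eps / 2) ltac:(lra)) as [k [r Hr]].
  destruct (Ah (eps / 2) ltac:(lra)) as [k' [s Hs]].
  pose proof (dnorm_nonneg X _ (in_dual_sub X f _ Hf (comb_dual k r))).
  pose proof (dnorm_nonneg X _ (in_dual_sub X h _ Hh (comb_dual k' s))).
  exists (k + k')%nat, (fun i => trunc k r i + trunc k' s i).
  apply Rle_lt_trans with
    (dnorm X (fun x => f x - comb k r x) + dnorm X (fun x => h x - comb k' s x)); [|lra].
  apply dnorm_le; [apply in_dual_sub; [apply in_dual_add; auto | apply comb_dual] | lra |].
  intro x. rewrite <- comb_add, (comb_trunc k r), (comb_trunc k' s) by lia.
  replace (f x + h x - (comb k r x + comb k' s x))
    with ((f x - comb k r x) + (h x - comb k' s x)) by ring.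
  eapply Rle_trans. apply Rabs_triang.
  pose proof (dnorm_bound X _ x (in_dual_sub X f _ Hf (comb_dual k r))).
  pose proof (dnorm_bound X _ x (in_dual_sub X h _ Hh (comb_dual k' s))).
  cbv beta in *. lra.
Qed.

Lemma closed_span_scal a f : in_closed_span f -> in_closed_span (fun x => a * f x).
Proof.
  intros [Hf Af]. split; [apply in_dual_scal; auto|]. intros eps He.
  pose proof (Rabs_pos a).
  destruct (Af (eps / (Rabs a + 1))) as [k [r Hr]]; [apply Rdiv_lt_0_compat; lra|].
  pose proof (in_dual_sub X f _ Hf (comb_dual k r)) as Hd.
  pose proof (dnorm_nonneg X _ Hd).
  exists k, (fun i => a * r i).
  apply Rle_lt_trans with (Rabs a * dnorm X (fun x => f x - comb k r x)).
  - apply dnorm_le; [apply in_dual_sub; [apply in_dual_scal; auto | apply comb_dual] | nra |].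
    intro x. rewrite <- comb_scal.
    replace (a * f x - a * comb k r x) with (a * (f x - comb k r x)) by ring.
    rewrite Rabs_mult, Rmult_assoc. apply Rmult_le_compat_l; [lra|].
    apply (dnorm_bound X (fun x => f x - comb k r x)); auto.
  - apply (Rmult_lt_compat_l (Rabs a + 1)) in Hr; [|lra].
    replace ((Rabs a + 1) * (eps / (Rabs a + 1))) with eps in Hr by (field; lra). nra.
Qed.

Lemma closed_span_subspace : dual_subspace X in_closed_span.
Proof.
  split; [|split; [|split]].
  - intros f [Hf _]. exact Hf.
  - split; [apply in_dual_zero|]. intros eps He. exists 0%nat, (fun _ => 0). simpl.
    eapply Rle_lt_trans; [|exact He].
    apply dnorm_le; [apply (in_dual_sub X (fun _ => 0) (fun _ => 0)); apply in_dual_zero | lra |].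
    intro x. rewrite Rminus_0_r, Rabs_R0. pose proof (norm_nonneg X x). lra.
  - apply closed_span_add.
  - apply closed_span_scal.
Qed.

Lemma closed_span_closed : dual_norm_closed X in_closed_span.
Proof.
  intros u f Hu Hf Hcv. split; auto. intros eps He.
  destruct (Hcv (eps / 2) ltac:(lra)) as [n Hn]. specialize (Hn n (le_n _)).
  unfold R_dist in Hn. rewrite Rminus_0_r in Hn.
  destruct (Hu n) as [Hun Aun]. destruct (Aun (eps / 2) ltac:(lra)) as [k [r Hr]].
  exists k, r. eapply Rle_lt_trans. apply (dnorm_sub_triangle X f (u n)); auto using comb_dual.
  rewrite dnorm_sub_sym by auto. pose proof (Rle_abs (dnorm X (fun x => u n x - f x))). lra.
Qed.

Lemma closed_span_gen j : in_closed_span (gs j).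
Proof.
  split; auto. intros e He. exists (S j), (fun i => if Nat.eqb i j then 1 else 0).
  eapply Rle_lt_trans; [|exact He].
  apply dnorm_le; [apply in_dual_sub; auto using comb_dual | lra |].
  intro y. simpl. rewrite Nat.eqb_refl.
  assert (Z : forall k, (k <= j)%nat -> comb k (fun i => if Nat.eqb i j then 1 else 0) y = 0).
  { induction k as [|k IH]; intros Hk; simpl; auto. rewrite IH by lia.
    replace (Nat.eqb k j) with false by (symmetry; apply Nat.eqb_neq; lia). ring. }
  rewrite Z by lia. replace (gs j y - (0 + 1 * gs j y)) with 0 by ring. rewrite Rabs_R0.
  pose proof (norm_nonneg X y). lra.
Qed.

Lemma closed_span_norming (d : nat -> X) :
  (forall x eps, eps > 0 -> exists n, ns_norm (ns_sub x (d n)) < eps) ->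
  (forall j, gs j (d j) = ns_norm (d j)) -> norming X in_closed_span.
Proof.
  intros Hd Hgn x. split.
  - intros z [m [[Hm _] [Hd1 ->]]]. apply dnorm_le_1; auto.
  - intros b Hb. apply le_epsilon_le. intros eps He.
    destruct (Hd x (eps / 2) ltac:(lra)) as [j Hj].
    assert (Dg : dnorm X (gs j) <= 1) by (apply dnorm_le; auto; [lra | intro; rewrite Rmult_1_l; auto]).
    assert (Hbj : Rabs (gs j x) <= b) by (apply Hb; exists (gs j); auto using closed_span_gen).
    assert (E : gs j x = gs j (d j) + gs j (ns_sub x (d j))).
    { rewrite <- (proj1 (Hgd j)), add_sub. auto. }
    pose proof (Rabs_le_between _ _ (Hgb j (ns_sub x (d j)))).
    pose proof (norm_reverse_triangle X x (d j)). pose proof (Rle_abs (gs j x)). pose proof (Hgn j).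
    lra.
Qed.

Lemma dual_separable_of_closed_span :
  (forall f, in_dual X f -> in_closed_span f) -> dual_separable X.
Proof.
  intros Hall. exists rat_comb. split; [intro N; apply comb_dual|].
  intros f Hf eps He. destruct (Hall f Hf) as [_ A].
  destruct (A (eps / 2) ltac:(lra)) as [k [r Hr]].
  destruct (rat_comb_dense k r (eps / 2) ltac:(lra)) as [N HN].
  exists N. eapply Rle_lt_trans; [apply (dnorm_sub_triangle X f (comb k r)) | lra];
    auto; apply comb_dual.
Qed.

End DualSeparability.

Lemma dual_separable_of_no_norming (X : NormedSpace) : separable X ->
  (forall M : (X -> R) -> Prop,
      dual_subspace X M -> dual_norm_closed X M -> norming X M ->
      forall f : X -> R, in_dual X f -> M f) -> dual_separable X.
Proof.
  intros Hsep Hall. pose proof Hsep as [d Hd].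
  destruct (choice _ (fun j => hahn_banach_separable X Hsep (d j))) as [gs Hgs].
  assert (Hgd : forall j, in_dual X (gs j)) by apply Hgs.
  assert (Hgb : forall j x, Rabs (gs j x) <= ns_norm x) by apply Hgs.
  apply (dual_separable_of_closed_span X gs Hgd Hgb).
  apply Hall.
  - apply closed_span_subspace; auto.
  - apply closed_span_closed; auto.
  - apply (closed_span_norming X gs Hgd Hgb d Hd). apply Hgs.
Qed.

Theorem proposition2p2 (X : NormedSpace) :
  complete X -> separable X -> property_au_star X ->
  (forall M : (X -> R) -> Prop,
      dual_subspace X M -> dual_norm_closed X M -> norming X M ->
      forall f : X -> R, in_dual X f -> M f)
  /\ dual_separable X.
Proof.
  intros _ Hsep Hau.
  pose proof (no_proper_norming_subspace X Hsep Hau) as Hno.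
  split; [exact Hno|].
  exact (dual_separable_of_no_norming X Hsep Hno).
Qed.
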